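(* If $\mathcal A_i$ is a yes-instance of \textsc{Restricted Subset Sum} for some $i\in\{0,\dots,t-1\}$, then there exists a set of items $\mathcal S\subseteq\mathcal X\cup\mathcal Y\cup\mathcal Z$ with $w(\mathcal S)\le W$ and $p(\mathcal S)\ge P$.
   Context: Let $n\ge1$, $B_n=\sum_{j=1}^{3n}(3n+1)^j$, $\widetilde{\mathcal A}_n=\{(3n+1)^{j_1}+(3n+1)^{j_2}+(3n+1)^{j_3}: j_1,j_2,j_3\in\{1,\dots,3n\}\}$. A set $\mathcal A=\{a_1,\dots,a_{3n}\}$ of $3n$ integers from $\widetilde{\mathcal A}_n$ with $\sum_j a_j=3B_n$ is a yes-instance of \textsc{Restricted Subset Sum} if some $\mathcal A^*\subseteq\mathcal A$ with $|\mathcal A^*|=n$ has $\sum_{a\in\mathcal A^*}a=B_n$. Let $t$ be a power of two, $\lg$ the base-2 logarithm, and for $i\in\{0,\dots,t-1\}$ let $\mathcal A_i=\{a^i_1,\dots,a^i_{3n}\}$ be such instances. Let $X=3tnB_n$, $B=B_n+nX$, $Y=3t^2nB$, $Z=(\lg t)^2Y^2 3^{(\lg t)^2}$, $T=\sum_{k=0}^{(\lg t)^2-1}3^k$, and fix a bijection $f:\{0,\dots,\lg t-1\}^2\to\{0,\dots,(\lg t)^2-1\}$. Items (weight $w$, profit $p$): encoding items $x^i_j$ ($0\le i\le t-1$, $1\le j\le 3n$) with $w=X+a^i_j$, $p=X+a^i_j+3iB$, forming $\mathcal X$; quadratization items forming $\mathcal Y$: for $0\le k<\ell\le\lg t-1$,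 $y^{1,0}_{k,\ell}$ with $w=p=3^{f(k,\ell)}Y$, $y^{0,1}_{k,\ell}$ with $w=p=3^{f(\ell,k)}Y$, $y^{1,1}_{k,\ell}$ with $w=(3^{f(k,\ell)}+3^{f(\ell,k)})Y$, $p=w+2^{k+\ell}\cdot9nB$, and for $0\le k\le\lg t-1$, $y^{1,1}_{k,k}$ with $w=3^{f(k,k)}Y$, $p=w+2^{2k}\cdot4.5nB+2^k\cdot1.5nB$; index items forming $\mathcal Z$: for $0\le k\le\lg t-1$, $z^0_k$ with $w=p=2^kZ+\sum_{\ell=0}^{\lg t-1}3^{f(k,\ell)}Y$ and $z^1_k$ with $w=p=2^kZ+2^k\cdot 3B$. For a set $\mathcal S$ of items, $w(\mathcal S)=\sum_{x\in\mathcal S}w(x)$, $p(\mathcal S)=\sum_{x\in\mathcal S}p(x)$. Finally $W=(t-1)Z+TY+(3t-2)B$ and $P=W+\binom{t}{2}\cdot 9nB$. *)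

From mathcomp Require Import all_boot all_order all_algebra.
Set Implicit Arguments. Unset Strict Implicit. Unset Printing Implicit Defensive.
Import GRing.Theory Num.Theory.

Definition Bn (n : nat) : nat := \sum_(1 <= j < (3 * n).+1) (3 * n + 1) ^ j.

Definition in_Atilde (n x : nat) : Prop :=
  exists j1 j2 j3 : nat,
    [/\ 1 <= j1 <= 3 * n, 1 <= j2 <= 3 * n, 1 <= j3 <= 3 * n &
        x = (3 * n + 1) ^ j1 + (3 * n + 1) ^ j2 + (3 * n + 1) ^ j3].

(* An instance A = {a_1,...,a_{3n}} is given as a : 'I_(3n) -> nat
   (index j : 'I_(3n) stands for a_{j+1}). *)
Definition RSS_instance (n : nat) (a : 'I_(3 * n) -> nat) : Prop :=
  (forall j, in_Atilde n (a j)) /\ \sum_(j < 3 * n) a j = 3 * Bn n.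

Arguments RSS_instance : clear implicits.

Definition RSS_yes (n : nat) (a : 'I_(3 * n) -> nat) : Prop :=
  RSS_instance n a /\
  exists J : {set 'I_(3 * n)}, #|J| = n /\ \sum_(j in J) a j = Bn n.

Arguments RSS_yes : clear implicits.

(* Constants; t = 2^m, m = lg t. *)
Section Constants.
Variables (n m t : nat).
Definition cX : nat := 3 * t * n * Bn n.
Definition cB : nat := Bn n + n * cX.
Definition cY : nat := 3 * t ^ 2 * n * cB.
Definition cZ : nat := m ^ 2 * cY ^ 2 * 3 ^ (m ^ 2).
Definition cT : nat := \sum_(k < m ^ 2) 3 ^ k.
Definition cW : nat := (t - 1) * cZ + cT * cY + (3 * t - 2) * cB.
Definition cP : nat := cW + 'C(t, 2) * 9 * n * cB.
End Constants.

(* The universe of item "names" (a disjoint union):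
   inl (i, j)                     : encoding item x^i_{j+1}
   inr (inl (k, l))               : y^{1,0}_{k,l}   (valid only if k < l)
   inr (inr (inl (k, l)))         : y^{0,1}_{k,l}   (valid only if k < l)
   inr (inr (inr (inl (k, l))))   : y^{1,1}_{k,l}   (valid only if k <= l)
   inr (inr (inr (inr (inl k))))  : z^0_k
   inr (inr (inr (inr (inr k))))  : z^1_k *)
Definition item (n m t : nat) : finType :=
  (('I_t * 'I_(3 * n)) +
   (('I_m * 'I_m) + (('I_m * 'I_m) + (('I_m * 'I_m) + ('I_m + 'I_m)))))%type.

Definition valid_item (n m t : nat) (x : item n m t) : bool :=
  match x with
  | inl _ => true
  | inr (inl (k, l)) => (k < l)%N
  | inr (inr (inl (k, l))) => (k < l)%N
  | inr (inr (inr (inl (k, l)))) => (k <= l)%N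
  | inr (inr (inr (inr _))) => true
  end.

Section Items.
Variables (n m t : nat) (f : 'I_m * 'I_m -> 'I_(m ^ 2))
          (a : 'I_t -> 'I_(3 * n) -> nat).

Definition weight (x : item n m t) : nat :=
  match x with
  | inl (i, j) => cX n t + a i j
  | inr (inl (k, l)) => 3 ^ f (k, l) * cY n t
  | inr (inr (inl (k, l))) => 3 ^ f (l, k) * cY n t
  | inr (inr (inr (inl (k, l)))) =>
      if (k < l)%N then (3 ^ f (k, l) + 3 ^ f (l, k)) * cY n t
      else 3 ^ f (k, k) * cY n t
  | inr (inr (inr (inr (inl k)))) =>
      2 ^ k * cZ n m t + \sum_(l < m) 3 ^ f (k, l) * cY n t
  | inr (inr (inr (inr (inr k)))) => 2 ^ k * cZ n m t + 2 ^ k * 3 * cB n t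
  end.

Local Open Scope ring_scope.

Definition profit (x : item n m t) : rat :=
  match x with
  | inl (i, j) => (cX n t + a i j + 3 * i * cB n t)%N%:R
  | inr (inr (inr (inl (k, l)))) =>
      if (k < l)%N then (weight x)%:R + (2 ^ (k + l) * 9 * n * cB n t)%N%:R
      else (weight x)%:R + (2 ^ (2 * k))%N%:R * (9 / 2) * (n * cB n t)%N%:R
                         + (2 ^ k)%N%:R * (3 / 2) * (n * cB n t)%N%:R
  | _ => (weight x)%:R
  end.

Definition wS (S : {set item n m t}) : nat := (\sum_(x in S) weight x)%N.
Definition pS (S : {set item n m t}) : rat := \sum_(x in S) profit x.
End Items.

From mathcomp Require Import all_boot all_order all_algebra.
From mathcomp Require Import zify ring.
Import GRing.Theory.

(** Write i0 (the index of a yes-instance, with yes-witness J) in binary,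
    with bits b_0, ..., b_{m-1}.  Take x^{i0}_j for j in J, every encoding
    item of the instances i > i0, z^1_k or z^0_k according as b_k = 1 or 0,
    and y^{b_k,b_l}_{k,l} for every k <= l with (b_k, b_l) <> (0, 0).  Every
    term 3^{f(k,l)} Y is then paid exactly once (by z^0_k when b_k = 0, by a
    y-item otherwise), the Z-parts add up to (t-1) Z and the B-parts to
    B + 3B (t-1-i0) + 3B i0 = (3t-2) B, so the weight is exactly W.  The profit
    exceeds the weight by 3 n B i0 + 9 n B (i0+1 + ... + t-1) on the encoding
    items and, since the 2^k with b_k = 1 add up to i0, by
    (9/2 i0^2 + 3/2 i0) n B on the y^{1,1} items: in total
    9 n B (0 + 1 + ... + t-1) = binom(t,2) 9 n B, so the profit is exactly P. *)

Lemma sum_expn2 m : \sum_(k < m) 2 ^ k = 2 ^ m - 1.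
Proof.
elim: m => [|m IH]; first by rewrite big_ord0.
have : 0 < 2 ^ m by rewrite expn_gt0.
by rewrite big_ord_recr /= IH expnS; lia.
Qed.

Lemma binary_expansion m x : x < 2 ^ m -> x = \sum_(k < m | odd (x %/ 2 ^ k)) 2 ^ k.
Proof.
suff -> : \sum_(k < m | odd (x %/ 2 ^ k)) 2 ^ k = x - x %/ 2 ^ m * 2 ^ m.
  by move=> /divn_small ->; rewrite subn0.
elim: m => [|m IH]; first by rewrite big_ord0 divn1 muln1 subnn.
rewrite big_mkcond big_ord_recr /= -big_mkcond IH expnSr divnMA.
have := leq_trunc_div x (2 ^ m); have := divn_eq (x %/ 2 ^ m) 2.
rewrite modn2; case: odd => /=; nia.
Qed.

Lemma big_pair_cond (R : Type) (idx : R) (op : Monoid.com_law idx) (I J : finType)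
    (P : pred (I * J)) (F : I * J -> R) :
  \big[op/idx]_(p | P p) F p = \big[op/idx]_i \big[op/idx]_(j | P (i, j)) F (i, j).
Proof. by rewrite pair_big_dep; apply: eq_big => -[]. Qed.

Section OrdinalPairs.
Local Open Scope ring_scope.
Variables (R : nmodType) (m : nat).
Implicit Types (P : pred 'I_m) (Q : 'I_m -> 'I_m -> bool).

Lemma sum_rect_cond P P' (F : 'I_m -> 'I_m -> R) :
  \sum_(i | P i) \sum_(j | P' j) F i j = \sum_i \sum_(j | P i && P' j) F i j.
Proof.
rewrite big_mkcond; apply: eq_bigr => i _.
by case: (P i); rewrite ?big_pred0_eq.
Qed.

Lemma sum_pairs_by_order Q (F : 'I_m -> 'I_m -> R) :
  \sum_(i < m) \sum_(j < m | Q i j) F i j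
  = \sum_(i < m) \sum_(j < m | (i < j)%N && Q i j) F i j
  + \sum_(i < m) \sum_(j < m | (i < j)%N && Q j i) F j i
  + \sum_(i < m | Q i i) F i i.
Proof.
have -> : \sum_(i < m) \sum_(j < m | (i < j)%N && Q j i) F j i
         = \sum_(i < m) \sum_(j < m | (j < i)%N && Q i j) F i j.
  by rewrite (exchange_big_dep xpredT).
rewrite (big_mkcond (fun i => Q i i)) -!big_split /=.
apply: eq_bigr => i _.
rewrite (bigID (fun j : 'I_m => i < j)%N).
rewrite [X in _ + X = _](bigID (fun j : 'I_m => j < i)%N).
rewrite addrA; congr (_ + _ + _); first 2 last.
- case: (boolP (Q i i)) => Qii;
    [rewrite (big_pred1 i) | rewrite big_pred0] => // j /=; rewrite -?val_eqE /=;
    by case: ltngtP => [||/val_inj <-] /=; rewrite ?andbT ?andbF ?Qii ?(negbTE Qii).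
- by apply: eq_bigl => j; rewrite andbC.
- by apply: eq_bigl => j; case: ltngtP; rewrite ?andbT ?andbF.
Qed.

Lemma sum_upper_triangle P (H : 'I_m -> 'I_m -> R) (D : 'I_m -> R) :
  \sum_(i < m) \sum_(j < m | [&& i <= j, P i & P j]%N)
     (if (i < j)%N then H i j + H j i else H i i + D i)
  = \sum_(i < m | P i) \sum_(j < m | P j) H i j + \sum_(i < m | P i) D i.
Proof.
rewrite sum_rect_cond (sum_pairs_by_order (fun i j => [&& i <= j, P i & P j]%N)).
rewrite (sum_pairs_by_order (fun i j => P i && P j)).
rewrite [X in _ + X + _ = _]big1 ?addr0 => [|i _]; last first.
  by apply: big_pred0 => j; case: ltngtP.
rewrite -[RHS]addrA; congr (_ + _); last first.
  rewrite (eq_bigl P (fun i => H i i)) => [|i]; last by rewrite andbb.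
  by rewrite -big_split; apply: eq_big => [i|i _]; rewrite ?leqnn ?ltnn ?andbb.
rewrite -big_split; apply: eq_bigr => i _.
rewrite [X in _ = _ + X](eq_bigl (fun j : 'I_m => [&& (i < j)%N, P i & P j]));
  last by move=> j; rewrite (andbC (P j)).
rewrite -big_split; apply: eq_big => [j|j /andP[-> _] //].
by case: ltnP => // /ltnW ->.
Qed.

Lemma sum_grid_by_bits (b : pred 'I_m) (H : 'I_m -> 'I_m -> R) :
  \sum_(i < m) \sum_(j < m | [&& i < j, b i & ~~ b j]%N) H i j
  + (\sum_(i < m) \sum_(j < m | [&& i < j, ~~ b i & b j]%N) H j i
  + (\sum_(i < m | b i) \sum_(j < m | b j) H i j
  + \sum_(i < m | ~~ b i) \sum_(j < m) H i j))
  = \sum_(i < m) \sum_(j < m) H i j.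
Proof.
rewrite [RHS](bigID b) /= !addrA; congr (_ + _).
have -> : \sum_(i < m | b i) \sum_(j < m) H i j
  = \sum_(i < m | b i) \sum_(j < m | b j) H i j
  + \sum_(i < m | b i) \sum_(j < m | ~~ b j) H i j.
  by rewrite -big_split; apply: eq_bigr => i _; rewrite [LHS](bigID b).
rewrite addrC; congr (_ + _).
rewrite sum_rect_cond (sum_pairs_by_order (fun i j => b i && ~~ b j)).
rewrite [\sum_(i < m | b i && ~~ b i) _]big_pred0 => [|i]; last by rewrite andbN.
rewrite addr0; congr (_ + _).
by apply: eq_bigr => i _; apply: eq_bigl => j; rewrite (andbC (b j)).
Qed.
End OrdinalPairs.

Lemma sum_row_in_and_above (R : nmodType) t N (i0 : 'I_t) (J : {set 'I_N})
    (F : 'I_t -> 'I_N -> R) :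
  (\sum_(i < t) \sum_(j < N | (i == i0) && (j \in J) || (i0 < i)%N) F i j
   = \sum_(j in J) F i0 j + \sum_(i < t | (i0 < i)%N) \sum_(j < N) F i j)%R.
Proof.
rewrite (bigD1 i0) //= ltnn (eq_bigl (mem J)) => [|j]; last by rewrite eqxx orbF.
congr (_ + _)%R; rewrite big_mkcond [RHS]big_mkcond; apply: eq_bigr => i _ /=.
case: eqVneq => [->|_] /=; first by rewrite ltnn.
by case: ltnP => _; rewrite ?big_pred0_eq.
Qed.

Lemma big_ord_gtn (R : nmodType) t k (F : nat -> R) :
  (\sum_(i < t | (k < i)%N) F i = \sum_(k.+1 <= i < t) F i)%R.
Proof. by rewrite big_geq_mkord. Qed.

Section Witness.
Variables (n m t : nat) (f : 'I_m * 'I_m -> 'I_(m ^ 2))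
  (a : 'I_t -> 'I_(3 * n) -> nat).
Hypotheses (t_eq : t = 2 ^ m) (f_bij : bijective f)
  (a_inst : forall i, RSS_instance n (a i)).
Variables (i0 : 'I_t) (J : {set 'I_(3 * n)}).
Hypotheses (J_card : #|J| = n) (J_sum : \sum_(j in J) a i0 j = Bn n).

Definition bit (k : 'I_m) : bool := odd (i0 %/ 2 ^ k).

Lemma i0_bits : (i0 : nat) = \sum_(k < m | bit k) 2 ^ k.
Proof. by apply: binary_expansion; rewrite -t_eq. Qed.

Definition in_solution (x : item n m t) : bool :=
  match x with
  | inl (i, j) => (i == i0) && (j \in J) || (i0 < i)
  | inr (inl (k, l)) => [&& k < l, bit k & ~~ bit l]
  | inr (inr (inl (k, l))) => [&& k < l, ~~ bit k & bit l]
  | inr (inr (inr (inl (k, l)))) => [&& k <= l, bit k & bit l]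
  | inr (inr (inr (inr (inl k)))) => ~~ bit k
  | inr (inr (inr (inr (inr k)))) => bit k
  end.

Definition solution : {set item n m t} := [set x | in_solution x].

Lemma solution_valid : solution \subset [pred x | valid_item x].
Proof.
by apply/subsetP => -[[i j]|[[k l]|[[k l]|[[k l]|[k|k]]]]]; rewrite inE //= => /andP[].
Qed.

Lemma sum_solution (R : Type) (idx : R) (op : Monoid.com_law idx)
    (F : item n m t -> R) :
  \big[op/idx]_(x in solution) F x =
  op (\big[op/idx]_(i < t)
        \big[op/idx]_(j < 3 * n | (i == i0) && (j \in J) || (i0 < i)%N)
          F (inl (i, j)))
  (op (\big[op/idx]_(k < m) \big[op/idx]_(l < m | [&& k < l, bit k & ~~ bit l]%N)
         F (inr (inl (k, l))))
  (op (\big[op/idx]_(k < m) \big[op/idx]_(l < m | [&& k < l, ~~ bit k & bit l]%N)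
         F (inr (inr (inl (k, l)))))
  (op (\big[op/idx]_(k < m) \big[op/idx]_(l < m | [&& k <= l, bit k & bit l]%N)
         F (inr (inr (inr (inl (k, l))))))
  (op (\big[op/idx]_(k < m | ~~ bit k) F (inr (inr (inr (inr (inl k))))))
      (\big[op/idx]_(k < m | bit k) F (inr (inr (inr (inr (inr k)))))))))).
Proof.
rewrite (eq_bigl in_solution) => [|x]; last by rewrite inE.
by rewrite !big_sumType !big_pair_cond.
Qed.

Lemma weight_encoding :
  \sum_(i < t) \sum_(j < 3 * n | (i == i0) && (j \in J) || (i0 < i))
     weight f a (inl (i, j))
  = cB n t + (t - i0.+1) * (3 * cB n t).
Proof.
rewrite sum_row_in_and_above big_split /= J_sum sum_nat_const J_card.
rewrite (eq_bigr (fun _ => 3 * cB n t)) => [|i _]; last first.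
  by rewrite big_split /= sum_nat_const card_ord (a_inst i).2 /cB; lia.
by rewrite (big_ord_gtn _ _ _ (fun _ => 3 * cB n t)) sum_nat_const_nat /cB; lia.
Qed.

Lemma weight_quadratization :
  \sum_(k < m) \sum_(l < m | [&& k < l, bit k & ~~ bit l]) weight f a (inr (inl (k, l)))
  + (\sum_(k < m) \sum_(l < m | [&& k < l, ~~ bit k & bit l])
      weight f a (inr (inr (inl (k, l))))
  + (\sum_(k < m) \sum_(l < m | [&& k <= l, bit k & bit l])
      weight f a (inr (inr (inr (inl (k, l)))))
  + \sum_(k < m | ~~ bit k) \sum_(l < m) 3 ^ f (k, l) * cY n t))
  = cT m * cY n t.
Proof.
pose H k l := 3 ^ f (k, l) * cY n t.
have -> : cT m * cY n t = \sum_(k < m) \sum_(l < m) H k l.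
  rewrite /cT big_distrl /= (reindex f) /=; last exact: onW_bij.
  by rewrite pair_bigA; apply: eq_bigr => -[].
rewrite -(sum_grid_by_bits _ _ bit H).
have -> : \sum_(k < m) \sum_(l < m | [&& k <= l, bit k & bit l])
      weight f a (inr (inr (inr (inl (k, l)))))
    = (\sum_(k < m | bit k) \sum_(l < m | bit l) H k l + \sum_(k < m | bit k) 0)%R.
  rewrite -sum_upper_triangle; apply: eq_bigr => k _; apply: eq_bigr => l _ /=.
  by case: ifP => _; rewrite /H ?mulnDl ?addr0.
by rewrite big1_eq addr0.
Qed.

Lemma weight_index :
  \sum_(k < m | ~~ bit k) weight f a (inr (inr (inr (inr (inl k)))))
  + \sum_(k < m | bit k) weight f a (inr (inr (inr (inr (inr k)))))
  = (t - 1) * cZ n m t + \sum_(k < m | ~~ bit k) \sum_(l < m) 3 ^ f (k, l) * cY n t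
    + 3 * cB n t * i0.
Proof.
have -> : (t - 1) * cZ n m t
    = \sum_(k < m | bit k) 2 ^ k * cZ n m t + \sum_(k < m | ~~ bit k) 2 ^ k * cZ n m t.
  by rewrite {1}t_eq -sum_expn2 big_distrl (bigID bit).
have -> : 3 * cB n t * i0 = \sum_(k < m | bit k) 2 ^ k * 3 * cB n t.
  by rewrite {1}i0_bits big_distrr; apply: eq_bigr => k _; rewrite /= mulnC mulnA.
rewrite !big_split /=; lia.
Qed.

Lemma weight_quadratization_and_index :
  \sum_(k < m) \sum_(l < m | [&& k < l, bit k & ~~ bit l]) weight f a (inr (inl (k, l)))
  + (\sum_(k < m) \sum_(l < m | [&& k < l, ~~ bit k & bit l])
      weight f a (inr (inr (inl (k, l))))
  + (\sum_(k < m) \sum_(l < m | [&& k <= l, bit k & bit l])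
      weight f a (inr (inr (inr (inl (k, l)))))
  + (\sum_(k < m | ~~ bit k) weight f a (inr (inr (inr (inr (inl k)))))
  + \sum_(k < m | bit k) weight f a (inr (inr (inr (inr (inr k))))))))
  = (t - 1) * cZ n m t + cT m * cY n t + 3 * cB n t * i0.
Proof. by have := weight_quadratization; have := weight_index; lia. Qed.

Lemma weight_solution : wS f a solution = cW n m t.
Proof.
rewrite /wS sum_solution /= weight_encoding weight_quadratization_and_index /cW.
have := ltn_ord i0; nia.
Qed.

Local Open Scope ring_scope.

Definition gain (x : item n m t) : rat :=
  match x with
  | inl (i, _) => (3 * i * cB n t)%:R
  | inr (inr (inr (inl (k, l)))) =>
      if (k < l)%N then (2 ^ (k + l) * 9 * n * cB n t)%:R
      else (2 ^ (2 * k))%:R * (9 / 2) * (n * cB n t)%:R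
           + (2 ^ k)%:R * (3 / 2) * (n * cB n t)%:R
  | _ => 0
  end.

Lemma profitE x : profit f a x = (weight f a x)%:R + gain x.
Proof.
case: x => [[i j]|[[k l]|[[k l]|[[k l]|[k|k]]]]] /=; rewrite ?addr0 ?natrD //.
by case: ltnP => _; rewrite ?addrA.
Qed.

Lemma pSE (S : {set item n m t}) : pS f a S = (wS f a S)%:R + \sum_(x in S) gain x.
Proof.
by rewrite /pS /wS natr_sum -big_split; apply: eq_bigr => x _; exact: profitE.
Qed.

Lemma gain_encoding :
  \sum_(i < t) \sum_(j < 3 * n | (i == i0) && (j \in J) || (i0 < i)%N) gain (inl (i, j))
  = (3 * n * cB n t * (i0 + 3 * \sum_(i0.+1 <= i < t) i))%:R.
Proof.
rewrite sum_row_in_and_above /= sumr_const J_card.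
under eq_bigr do rewrite sumr_const card_ord.
rewrite (big_ord_gtn _ _ _ (fun i => (3 * i * cB n t)%:R *+ (3 * n))).
rewrite sumrMnl -natr_sum -!mulrnA -natrD; congr _%:R.
have -> : (\sum_(i0.+1 <= i < t) 3 * i * cB n t = 3 * cB n t * \sum_(i0.+1 <= i < t) i)%N.
  by rewrite big_distrr; apply: eq_bigr => i _ /=; ring.
ring.
Qed.

Lemma gain_quadratization :
  \sum_(k < m) \sum_(l < m | [&& k <= l, bit k & bit l]%N)
     gain (inr (inr (inr (inl (k, l)))))
  = (9 / 2 * (i0 : nat)%:R ^+ 2 + 3 / 2 * (i0 : nat)%:R) * (n * cB n t)%:R.
Proof.
pose c : rat := (n * cB n t)%:R.
pose H (k l : 'I_m) := 9 / 2 * c * (2 ^ k * 2 ^ l)%:R.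
pose D (k : 'I_m) := 3 / 2 * c * (2 ^ k)%:R.
rewrite (eq_bigr (fun k : 'I_m => \sum_(l < m | [&& k <= l, bit k & bit l]%N)
    (if (k < l)%N then H k l + H l k else H k k + D k))) => [|k _]; last first.
  apply: eq_bigr => l _ /=; rewrite /H /D /c.
  by case: ltnP => _; rewrite ?mul2n -?addnn expnD !natrM; field.
rewrite (sum_upper_triangle _ _ bit H D).
have -> : \sum_(k < m | bit k) \sum_(l < m | bit l) H k l
    = 9 / 2 * c * (i0 : nat)%:R ^+ 2.
  rewrite i0_bits natr_sum expr2 big_distrlr /= mulr_sumr; apply: eq_bigr => k _.
  by rewrite mulr_sumr; apply: eq_bigr => l _; rewrite /H natrM.
have -> : \sum_(k < m | bit k) D k = 3 / 2 * c * (i0 : nat)%:R.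
  by rewrite i0_bits natr_sum mulr_sumr.
by rewrite /c; ring.
Qed.

Lemma gain_solution :
  \sum_(x in solution) gain x = ('C(t, 2) * 9 * n * cB n t)%:R.
Proof.
have sum0 (P : 'I_m -> 'I_m -> bool) :
    \sum_(k < m) \sum_(l < m | P k l) (0 : rat) = 0.
  by rewrite big1 // => k _; rewrite big1_eq.
have binE : 'C(t, 2) = ('C(i0.+1, 2) + \sum_(i0.+1 <= i < t) i)%N.
  by rewrite -!bin2_sum -big_cat_nat.
have bin_i0 : 'C(i0.+1, 2)%:R = (i0.+1 * i0)%:R / 2 :> rat.
  have h : ('C(i0.+1, 2) * 2 = i0.+1 * i0)%N.
    by rewrite mulnC -(mul_bin_diag i0.+1 1) bin1.
  by rewrite -h natrM; field.
rewrite sum_solution /= gain_encoding gain_quadratization !sum0 !big1_eq.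
rewrite !add0r addr0 binE.
move: bin_i0 (cB n t) (\sum_(i0.+1 <= i < t) i); move: 'C(i0.+1, 2) => C bin_i0 B S1.
by rewrite !(natrD, natrM) bin_i0; field.
Qed.

Lemma profit_solution : pS f a solution = (cP n m t)%:R.
Proof. by rewrite pSE weight_solution gain_solution /cP -natrD. Qed.

End Witness.

Theorem lemma7 (n m t : nat) (f : 'I_m * 'I_m -> 'I_(m ^ 2))
  (a : 'I_t -> 'I_(3 * n) -> nat) :
  (1 <= n)%N ->
  t = (2 ^ m)%N ->
  bijective f ->
  (forall i : 'I_t, RSS_instance n (a i)) ->
  (exists i : 'I_t, RSS_yes n (a i)) ->
  exists S : {set item n m t},
    [/\ S \subset [pred x | valid_item x],
        (wS f a S <= cW n m t)%N &
        ((cP n m t)%:R <= pS f a S)%R].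
Proof.
move=> _ t_eq f_bij a_inst [i0 [_ [J [J_card J_sum]]]].
exists (solution n m t i0 J); split.
- exact: solution_valid.
- by rewrite weight_solution.
- by rewrite profit_solution.
Qed.
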